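(* Fix an integer base $b\ge 2$ and $f_*:\{0,\dots,b-1\}\to\mathbb{Z}^{\ge 0}$ with $f_*(0)=0$, $f_*(1)=1$, $\gcd(b,f_*(b-1))=1$, and suppose there is a digit $0\le m_*\le b-1$ with $\gcd(f(m_* )-m_*,f(b-1))=1$, where $f$ is the digit map $f\left(\sum_i a_ib^i\right)=\sum_i f_*(a_i)$ (base-$b$ representation). Let $D$ be the set of positive integers $n$ with $f^r(n)=n$ for some $r\ge1$, and fix $u\in D$. Assume that for each $x\in D$ there exists $h_x\in\mathbb{Z}^+$ such that $h_x+u$ and $h_x+x$ are concurrently $u$-integers. Then there exists $h\in\mathbb{Z}^+$ such that $h+x$ is a $u$-integer for each $x\in D$.
   Context: $f^r$ is the $r$-fold iterate of $f$. A positive integer $n$ is a $u$-integer if $f^r(n)=u$ for some $r\ge1$. Two positive integers $m,n$ are concurrently $u$-integers if there is some $r\ge 1$ with $f^r(m)=f^r(n)=u$. *)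

From mathcomp Require Import all_boot all_order all_algebra.
Set Implicit Arguments. Unset Strict Implicit. Unset Printing Implicit Defensive.

(* Base-b digits of n, least significant first (empty list for n = 0).
   The fuel n suffices since b >= 2 makes n %/ b < n for n > 0. *)
Fixpoint digits_aux (fuel b n : nat) : seq nat :=
  match fuel with
  | 0 => [::]
  | fuel'.+1 => if n == 0 then [::] else (n %% b) :: digits_aux fuel' b (n %/ b)
  end.

Definition digits (b n : nat) : seq nat := digits_aux n b n.

Definition digit_map (b : nat) (fstar : nat -> nat) (n : nat) : nat :=
  \sum_(a <- digits b n) fstar a.

Definition is_u_integer (f : nat -> nat) (u n : nat) : Prop :=
  exists r, 1 <= r /\ iter r f n = u.

Definition concurrently_u_integers (f : nat -> nat) (u m n : nat) : Prop :=
  exists r, 1 <= r /\ iter r f m = u /\ iter r f n = u.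

Definition in_D (f : nat -> nat) (n : nat) : Prop :=
  0 < n /\ exists r, 1 <= r /\ iter r f n = n.

From mathcomp Require Import all_boot all_order all_algebra.
From mathcomp Require Import zify cyclic.

(* Since 2 f(n) <= K + n, every orbit of the digit map f is eventually periodic
   and D is finite. Writing the digits of a preimage of c far to the left of x
   adds c to f(x); iterating, for every j and finite X there is H with
   f^j(H + x) = c + f^j(x) for all x in X. So once j steps send X into {u, z}
   with z periodic, the shift given by the hypothesis for z makes all of X
   concurrently u-integers, and induction over the finite set D produces h.
   The hypothesis covers every periodic z except z = 0. For that case the
   coprimality conditions give, in every residue class modulo f(b-1), numbers
   whose image is a power of b; this yields c such that c + u reaches u while
   c reaches 1, which reduces z = 0 to the hypothesis for x = 1. *)

Set Implicit Arguments.
Unset Strict Implicit.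
Unset Printing Implicit Defensive.

Section Iterates.
Variables (T : Type) (f : T -> T).

Lemma iter_periodic_mul p k x : iter p f x = x -> iter (k * p) f x = x.
Proof. by move=> px; rewrite iterM iter_fix. Qed.

Lemma iter_periodic_tail q i t x : iter (q + i) f x = iter i f x -> i <= t ->
  iter q f (iter t f x) = iter t f x.
Proof.
move=> per le_it; rewrite -iterD -(subnK le_it) addnA [q + _]addnC -addnA.
by rewrite iterD per -iterD.
Qed.

End Iterates.

Lemma bounded_orbit_eventually_periodic (f : nat -> nat) n M :
  (forall i, iter i f n <= M) -> exists i q, 0 < q /\ iter (q + i) f n = iter i f n.
Proof.
move=> bounded.
pose g (i : 'I_M.+2) : 'I_M.+1 := inord (iter i f n).
have /injectivePn [i [j neq_ij eq_g]] : ~~ injectiveb g.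
  by apply/injectiveP => /leq_card; rewrite !card_ord ltnn.
have {eq_g} eq_ij : iter i f n = iter j f n.
  by move: eq_g => /(congr1 val); rewrite /= !inordK // ltnS.
have [lt_ij | lt_ji] := ltnP i j.
  by exists i, (j - i); rewrite subn_gt0 subnK ?(ltnW lt_ij) ?eq_ij.
exists j, (i - j); rewrite subnK // subn_gt0 ltn_neqAle lt_ji andbT.
by rewrite eq_sym.
Qed.

Lemma digits_aux_fuel b fuel1 fuel2 n : 2 <= b -> n <= fuel1 -> n <= fuel2 ->
  digits_aux fuel1 b n = digits_aux fuel2 b n.
Proof.
move=> hb; elim: fuel1 fuel2 n => [|fuel1 IH] [|fuel2] n le1 le2 //=;
  try by have -> : n = 0 by lia.
case: eqP => // /eqP n_neq0.
have : n %/ b < n by apply: ltn_Pdiv; lia.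
by move=> lt_n; rewrite (IH fuel2) //; lia.
Qed.

Section DigitMap.
Variables (b : nat) (fstar : nat -> nat).
Hypotheses (hb : 2 <= b) (f0 : fstar 0 = 0).
Local Notation f := (digit_map b fstar).

Let b_gt0 : 0 < b. Proof. exact: ltnW. Qed.

Lemma digits_cons a r : r < b -> 0 < a * b + r ->
  digits b (a * b + r) = r :: digits b a.
Proof.
move=> lt_rb; rewrite {1}/digits; case E: (a * b + r) => [//|n] _ /=.
rewrite -E modnMDl modn_small // divnMDl ?divn_small ?addn0; try lia.
by rewrite /digits (@digits_aux_fuel b n a a hb) //; nia.
Qed.

Lemma digit_map0 : f 0 = 0.
Proof. by rewrite /digit_map /digits big_nil. Qed.

Lemma digit_map_step a r : r < b -> f (a * b + r) = f a + fstar r.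
Proof.
move=> lt_rb; have [n0|n_gt0] := posnP (a * b + r).
  have [-> ->] : a = 0 /\ r = 0 by nia.
  by rewrite digit_map0 f0.
by rewrite /digit_map digits_cons // big_cons addnC.
Qed.

Lemma digit_map_digit d : d < b -> f d = fstar d.
Proof. by move=> lt_db; rewrite -[d]add0n -(mul0n b) digit_map_step // digit_map0. Qed.

Lemma digit_map_add a k n : n < b ^ k -> f (a * b ^ k + n) = f a + f n.
Proof.
elim: k a n => [|k IH] a n lt_n.
  have -> : n = 0 by rewrite expn0 in lt_n; lia.
  by rewrite expn0 muln1 digit_map0 !addn0.
have lt_q : n %/ b < b ^ k by rewrite ltn_divLR // -expnSr.
have -> : a * b ^ k.+1 + n = (a * b ^ k + n %/ b) * b + n %% b.
  by rewrite {1}(divn_eq n b) expnSr mulnDl mulnA addnA.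
rewrite digit_map_step ?ltn_mod // IH // -addnA -digit_map_step ?ltn_mod //.
by rewrite -divn_eq.
Qed.

Lemma digit_map_pow_sub v k j : 0 < v <= b ^ k ->
  f (b ^ (j + k) - v) = j * f b.-1 + f (b ^ k - v).
Proof.
move=> /andP [v_gt0 le_v]; elim: j => // j IH.
have le_v' : v <= b ^ (j + k) by rewrite (leq_trans le_v) // leq_pexp2l; lia.
have -> : b ^ (j.+1 + k) - v = b.-1 * b ^ (j + k) + (b ^ (j + k) - v).
  by rewrite addSn expnS; move: (b ^ (j + k)) le_v' => X; nia.
by rewrite digit_map_add ?IH; lia.
Qed.

Lemma digit_map_linear_bound : exists K, forall n, 2 * f n <= K + n.
Proof.
pose M := \max_(d < b) fstar d; pose Mf := \max_(a < 2 * M) f a.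
exists (2 * (Mf + M)); elim/ltn_ind => n IH.
have [->|n_gt0] := posnP n; first by rewrite digit_map0.
have lt_r : n %% b < b by rewrite ltn_mod.
have le_r : fstar (n %% b) <= M.
  exact: (@leq_bigmax _ (fun d : 'I_b => fstar d) (Ordinal lt_r)).
have lt_a := ltn_Pdiv hb n_gt0.
rewrite {1 2}(divn_eq n b) digit_map_step //=.
move: (n %/ b) (n %% b) lt_a le_r => a r lt_a le_r.
have [lt_aM|le_aM] := ltnP a (2 * M).
  have : f a <= Mf.
    exact: (@leq_bigmax _ (fun a : 'I_(2 * M) => f a) (Ordinal lt_aM)).
  lia.
have := IH _ lt_a.
have : a * 2 <= a * b by rewrite leq_mul2l hb orbT.
lia.
Qed.

Lemma iter_digit_map_le : exists K, forall n i, iter i f n <= maxn K (n - i).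
Proof.
have [K le_K] := digit_map_linear_bound.
exists K => n; elim=> [|i IH]; first by rewrite subn0 leq_maxr.
by have := le_K (iter i f n); rewrite iterS; lia.
Qed.

Lemma in_D_bounded : exists K, forall x, in_D f x -> x <= K.
Proof.
have [K le_K] := iter_digit_map_le.
exists K => x [_ [r [r_gt0 per]]].
have := le_K x (x * r); rewrite iter_periodic_mul //.
have : x <= x * r by rewrite leq_pmulr.
lia.
Qed.

Lemma digit_map_eventually_periodic n :
  exists i q, 0 < q /\ iter (q + i) f n = iter i f n.
Proof.
have [K le_K] := iter_digit_map_le.
apply: (@bounded_orbit_eventually_periodic _ _ (maxn K n)) => i.
by have := le_K n i; lia.
Qed.

Hypothesis f1 : fstar 1 = 1.

Lemma digit_map_expn e : f (b ^ e) = 1.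
Proof.
rewrite -[b ^ e]addn0 -[b ^ e]mul1n digit_map_add ?expn_gt0 ?b_gt0 //.
by rewrite digit_map_digit // f1 digit_map0.
Qed.

Lemma digit_map_surjective m : exists a, f a = m.
Proof.
elim: m => [|m [a <-]]; first by exists 0; rewrite digit_map0.
by exists (a * b + 1); rewrite digit_map_step // f1 addn1.
Qed.

Lemma digit_map_iter_shift j c (X : seq nat) :
  exists H, {in X, forall x, iter j f (H + x) = c + iter j f x}.
Proof.
elim: j X => [|j IH] X; first by exists c.
have [H' shift'] := IH (map f X).
have [a fa] := digit_map_surjective H'.
exists (a * b ^ (\max_(x <- X) x)) => x xX.
rewrite !iterSr digit_map_add ?fa ?shift' ?map_f //.
by apply: leq_ltn_trans (leq_bigmax_seq x xX isT) (ltn_expl _ hb).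
Qed.

End DigitMap.

Lemma linear_congruence_solvable d F a c : 0 < F -> coprime d F ->
  exists k, a + k * d = c %[mod F].
Proof.
move=> F_gt0 co_dF; pose w := c + F.-1 * a.
have dvd_d : d %| chinese d F 0 w by rewrite /dvdn chinese_modl // mod0n.
exists (chinese d F 0 w %/ d); rewrite divnK // -modnDmr chinese_modr // modnDmr.
by rewrite addnCA -mulSn prednK // addnC mulnC modnMDl.
Qed.

Lemma linear_congruence2_solvable (x y F a c : nat) : 0 < F -> coprime `|x - y|%N F ->
  exists k, a + k * x = c + k * y %[mod F].
Proof.
move=> F_gt0; have [le_yx|lt_xy] := leqP y x.
  rewrite distnEl // => /(linear_congruence_solvable a c F_gt0) [k hk].
  by exists k; apply/eqP; rewrite -(subnK le_yx) mulnDr addnA eqn_modDr hk.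
rewrite distnEr 1?ltnW // => /(linear_congruence_solvable c a F_gt0) [k hk].
by exists k; apply/eqP; rewrite -(subnK (ltnW lt_xy)) mulnDr addnA eqn_modDr hk.
Qed.

Fixpoint undigits (P : nat) (s : seq nat) : nat :=
  if s is d :: s' then undigits P s' * P + d else 0.

Lemma sumn_le_undigits P s : 0 < P -> sumn s <= undigits P s.
Proof. by move=> P_gt0; elim: s => //= d s IH; nia. Qed.

Lemma undigits_mod P F s : P = 1 %[mod F] -> undigits P s = sumn s %[mod F].
Proof.
move=> P1; elim: s => //= d s IH.
by rewrite addnC -modnDmr -modnMml IH modnMml -modnMmr P1 modnMmr muln1 modnDmr.
Qed.

Section PowerImages.
Variables (b : nat) (fstar : nat -> nat).
Hypotheses (hb : 2 <= b) (f0 : fstar 0 = 0) (f1 : fstar 1 = 1).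
Local Notation f := (digit_map b fstar).
Hypothesis co_bF : coprime b (f b.-1).

Lemma digit_map_pred_gt0 : 0 < f b.-1.
Proof. by move: co_bF; case: posnP => // ->; rewrite /coprime gcdn0; lia. Qed.

Lemma digit_map_undigits o s : 0 < o -> all (fun d => d < b) s ->
  f (undigits (b ^ o) s) = sumn (map f s).
Proof.
move=> o_gt0; elim: s => [|d s IH] /=; first by rewrite digit_map0.
move=> /andP [lt_db all_s]; rewrite digit_map_add ?IH // 1?addnC //.
by rewrite (leq_trans lt_db) // -{1}(expn1 b) leq_pexp2l // ltnW.
Qed.

(* The witness has b^E - k f(m) digits 1 and k digits m in base b^o, where
   o = totient (f (b-1)); as b^o = 1 modulo f (b-1), it is congruent to its
   digit sum. *)
Lemma exists_power_preimage_congr m k c : m < b -> exists n E,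
  c <= n /\ f n = b ^ E /\ n + k * f m = 1 + k * m %[mod f b.-1].
Proof.
move=> lt_mb; set F := f b.-1; pose o := totient F; pose e := k * f m + c.
have o_gt0 : 0 < o by rewrite totient_gt0 digit_map_pred_gt0.
have E1 : b ^ (o * e) = 1 %[mod F].
  by rewrite expnM -modnXm Euler_exp_totient // modnXm exp1n.
have le_e : e <= b ^ (o * e).
  apply/ltnW/(leq_trans (ltn_expl e hb)).
  by rewrite leq_pexp2l ?leq_pmull // ltnW.
pose s := nseq (b ^ (o * e) - k * f m) 1 ++ nseq k m.
have sum_s : sumn s = b ^ (o * e) - k * f m + k * m.
  by rewrite sumn_cat !sumn_nseq mul1n [m * k]mulnC.
have le_s : sumn s <= undigits (b ^ o) s by rewrite sumn_le_undigits // expn_gt0 ltnW.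
exists (undigits (b ^ o) s), (o * e); split; [|split].
- by move: le_s; rewrite sum_s; lia.
- rewrite digit_map_undigits // ?all_cat ?all_nseq ?hb ?lt_mb ?orbT //.
  rewrite map_cat !map_nseq sumn_cat !sumn_nseq digit_map_digit // f1; lia.
- rewrite -modnDml (undigits_mod s (Euler_exp_totient co_bF)) modnDml sum_s.
  have -> : b ^ (o * e) - k * f m + k * m + k * f m = b ^ (o * e) + k * m by lia.
  by rewrite -modnDml E1 modnDml.
Qed.

Lemma exists_power_preimage_in_class m rho : m < b -> coprime `|f m - m|%N (f b.-1) ->
  exists j E, f (rho + j * f b.-1) = b ^ E.
Proof.
move=> lt_mb co_m; set F := f b.-1.
have [k hk] := linear_congruence2_solvable rho 1 digit_map_pred_gt0 co_m.
have [n [E [le_n [fn hn]]]] := exists_power_preimage_congr k rho lt_mb.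
have dvd_F : F %| n - rho.
  by rewrite -eqn_mod_dvd // -(eqn_modDr (k * f m)) hn hk.
by exists ((n - rho) %/ F), E; rewrite divnK // subnKC.
Qed.

End PowerImages.

(* The time r may be 0; the main theorem appends a period of u. *)
Definition synchronizable (f : nat -> nat) (u : nat) (s : seq nat) : Prop :=
  exists h r, {in s, forall x, iter r f (h + x) = u}.

Section Synchronization.
Variables (b : nat) (fstar : nat -> nat) (mstar u : nat).
Hypotheses (hb : 2 <= b) (f0 : fstar 0 = 0) (f1 : fstar 1 = 1) (lt_mb : mstar < b).
Local Notation f := (digit_map b fstar).
Hypotheses (co_bF : coprime b (f b.-1)) (co_m : coprime `|f mstar - mstar|%N (f b.-1)).
Hypothesis u_in_D : in_D f u.
Hypothesis concurrent : forall x, in_D f x ->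
  exists hx, 0 < hx /\ concurrently_u_integers f u (hx + u) (hx + x).

Lemma synchronizable_pullback T h s s' :
  {subset [seq iter T f (h + x) | x <- s] <= s'} ->
  synchronizable f u s' -> synchronizable f u s.
Proof.
move=> sub [c [r sync']].
have [H shift] := digit_map_iter_shift hb f0 f1 T c [seq h + x | x <- s].
exists (H + h), (r + T) => x xs.
rewrite iterD -addnA shift ?map_f // sync' // sub //.
exact: (map_f (fun x => iter T f (h + x))).
Qed.

Lemma synchronizable_concurrent z : in_D f z -> synchronizable f u [:: u; z].
Proof.
move=> /concurrent [c [_ [r [_ [cu cz]]]]].
by exists c, r => x; rewrite !inE => /orP [] /eqP ->.
Qed.

Lemma synchronizable_u0 : synchronizable f u [:: u; 0].
Proof.
have [u_gt0 [p [p_gt0 per_u]]] := u_in_D.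
have [j [E f_img]] :=
  exists_power_preimage_in_class hb f0 f1 co_bF (u.-1 + f (b ^ u - u)) lt_mb co_m.
have [a fa] := digit_map_surjective hb f0 f1 u.-1.
have lt_pow : b ^ (j + u) < b ^ (j + u).+1 by rewrite ltn_exp2l.
have lt_u : u < b ^ u by rewrite ltn_expl.
have le_u : 0 < u <= b ^ u by rewrite u_gt0 ltnW.
have lt_uk : u < b ^ (j + u).
  by rewrite (leq_trans lt_u) // leq_pexp2l ?leq_addl // ltnW.
(* f (c + u) = f a + 1 = u, while f c = u - 1 + f (b^u - u) + j f (b-1) is
   mapped to a power of b, hence to 1 in two more steps. *)
pose c := a * b ^ (j + u).+1 + (b ^ (j + u) - u).
have f_c : f c = u.-1 + f (b ^ u - u) + j * f b.-1.
  rewrite (digit_map_add hb f0) ?(digit_map_pow_sub hb f0) ?fa //; first lia.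
  by rewrite (leq_ltn_trans (leq_subr _ _)).
have f_cu : f (c + u) = u.
  rewrite -addnA subnK 1?ltnW // (digit_map_add hb f0) // fa.
  by rewrite (digit_map_expn hb f0 f1) addn1 prednK.
have iter3_c : iter 3 f c = 1 by rewrite /= f_c f_img digit_map_expn.
apply: (@synchronizable_pullback (3 * p).+1 c _ [:: u; 1]); last first.
  apply: synchronizable_concurrent; split => //; exists 1; split => //=.
  by rewrite digit_map_digit.
move=> _ /mapP [x + ->]; rewrite !inE => /orP [] /eqP ->.
  by rewrite iterSr f_cu iter_periodic_mul // eqxx.
have le3 : 3 <= (3 * p).+1 by lia.
rewrite addn0 -(subnK le3) iterD iter3_c iter_fix ?eqxx ?orbT //.
by rewrite digit_map_digit.
Qed.

Lemma synchronizable_periodic z q : 0 < q -> iter q f z = z ->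
  synchronizable f u [:: u; z].
Proof.
case: (posnP z) => [-> _ _|z_gt0 q_gt0 per]; first exact: synchronizable_u0.
by apply: synchronizable_concurrent; split => //; exists q.
Qed.

Lemma synchronizable_all s : synchronizable f u s.
Proof.
have [_ [p [p_gt0 per_u]]] := u_in_D.
elim: s => [|y s [h [r sync_s]]]; first by exists 0, 0.
have [i [q [q_gt0 per]]] := digit_map_eventually_periodic hb f0 (h + y).
pose T := i * p + r.
apply: (@synchronizable_pullback T h _ [:: u; iter T f (h + y)]); last first.
  by apply: (synchronizable_periodic q_gt0); apply: iter_periodic_tail per _; nia.
move=> _ /mapP [x + ->]; rewrite inE => /orP [/eqP -> | xs].
  by rewrite !inE eqxx orbT.
by rewrite /T iterD sync_s // iter_periodic_mul // inE eqxx.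
Qed.

End Synchronization.

Theorem lemma2p2 (b : nat) (fstar : nat -> nat) (mstar u : nat) :
  2 <= b ->
  fstar 0 = 0 ->
  fstar 1 = 1 ->
  coprime b (fstar b.-1) ->
  mstar < b ->
  coprime `|digit_map b fstar mstar - mstar|%N (digit_map b fstar b.-1) ->
  in_D (digit_map b fstar) u ->
  (forall x, in_D (digit_map b fstar) x ->
     exists hx, 0 < hx /\
       concurrently_u_integers (digit_map b fstar) u (hx + u) (hx + x)) ->
  exists h, 0 < h /\
    forall x, in_D (digit_map b fstar) x -> is_u_integer (digit_map b fstar) u (h + x).
Proof.
move=> hb f0 f1 co_b lt_mb co_m u_in_D concurrent.
have co_bF : coprime b (digit_map b fstar b.-1).
  by rewrite digit_map_digit // ltn_predL ltnW.
have [K le_K] := in_D_bounded hb f0.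
have [h [r sync]] :=
  synchronizable_all hb f0 f1 lt_mb co_bF co_m u_in_D concurrent (iota 1 K.+1).
have [_ [p [p_gt0 per_u]]] := u_in_D.
exists h.+1; split => // x x_in_D.
exists (p + r); split; first by rewrite addn_gt0 p_gt0.
(* Synchronising the successors of D makes the shift h.+1 positive. *)
have x_iota : x.+1 \in iota 1 K.+1 by rewrite mem_iota; have := le_K _ x_in_D; lia.
by rewrite iterD addSnnS sync.
Qed.
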